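(* Let $n_A,n_B\ge1$, $\Delta\ge 0$, and let $H\in\mathbb{C}^{(n_An_B)\times(n_An_B)}$ be a Hermitian matrix (the announced payoff Hamiltonian, on $\mathbb{C}^{n_A}\otimes\mathbb{C}^{n_B}$). Let $$\Phi(H)=\operatorname*{arg\,max}_{\rho_B\in\mathcal{P}_B}\ \min_{\rho_A\in\mathcal{P}_A}\operatorname{tr}\big((\rho_A\otimes\rho_B)H\big)$$ be the set of security strategies of the maximizing player $B$ (the ''naive victim'') in the zero-sum game with payoff $\operatorname{tr}((\rho_A\otimes\rho_B)H)$, and let $$\Phi_r(H)=\operatorname*{arg\,max}_{\rho_B\in\mathcal{P}_B}\ \min_{\rho_A\in\mathcal{P}_A,\ D\in\mathcal{D}}\operatorname{tr}\big((\rho_A\otimes\rho_B)(H-D)\big)$$ be the set of strategies of a ''robust victim'' who optimizes the worst-case outcome over all true Hamiltonians $H-D$ consistent with the announced $H$ and the deception budget. Then $\Phi(H)=\Phi_r(H)$.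
   Context: $\mathcal{P}_A$ (resp. $\mathcal{P}_B$) is the set of $n_A\times n_A$ (resp. $n_B\times n_B$) complex density matrices, i.e. positive semidefinite matrices of trace one. The deception set is $\mathcal{D}=\{D\in\mathbb{C}^{(n_An_B)\times(n_An_B)}: D=D^\dagger,\ \|D\|_1\le\Delta\}$, where $\|A\|_1=\sup_{\|x\|_1=1}\|Ax\|_1$ is the matrix norm induced by the vector $1$-norm. Player $A$ (the deceiver) is the minimizer and player $B$ (the victim) the maximizer. *)

From HB Require Import structures.
From mathcomp Require Import all_boot all_order all_algebra.
From mathcomp Require Import complex mxtens.
From mathcomp Require Import classical_sets reals.
Set Implicit Arguments.
Unset Strict Implicit.
Unset Printing Implicit Defensive.
Import Order.TTheory GRing.Theory Num.Theory.
Local Open Scope ring_scope.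
Local Open Scope classical_set_scope.

Section Defs.
Variable R : realType.
Local Notation C := R[i].

Definition adjmx {m n} (A : 'M[C]_(m, n)) : 'M[C]_(n, m) :=
  \matrix_(i, j) conjc (A j i).

Definition herm_mx {n} (A : 'M[C]_n) : Prop := adjmx A = A.

Definition psd {n} (A : 'M[C]_n) : Prop :=
  herm_mx A /\ forall x : 'cV[C]_n, 0 <= (adjmx x *m A *m x) 0 0.

Definition density {n} (A : 'M[C]_n) : Prop := psd A /\ \tr A = 1.

Definition vnorm1 {n} (x : 'cV[C]_n) : R := \sum_i Normc.normc (x i 0).

Definition opnorm1 {n} (D : 'M[C]_n) : R :=
  sup [set vnorm1 (D *m x) | x in [set x : 'cV[C]_n | vnorm1 x = 1]].

Definition deception (nA nB : nat) (Delta : R) : set 'M[C]_(nA * nB) :=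
  [set D | herm_mx D /\ opnorm1 D <= Delta].

Definition payoff {nA nB} (rA : 'M[C]_nA) (rB : 'M[C]_nB)
  (H : 'M[C]_(nA * nB)) : R := complex.Re (\tr ((rA *t rB) *m H)).

Definition naive_value {nA nB} (H : 'M[C]_(nA * nB)) (rB : 'M[C]_nB) : R :=
  inf [set payoff rA rB H | rA in [set rA : 'M[C]_nA | density rA]].

Definition robust_value {nA nB} (Delta : R) (H : 'M[C]_(nA * nB))
  (rB : 'M[C]_nB) : R :=
  inf [set payoff p.1 rB (H - p.2) |
        p in [set p : 'M[C]_nA * 'M[C]_(nA * nB) |
                density p.1 /\ @deception nA nB Delta p.2]].

Definition argmax_density {n} (f : 'M[C]_n -> R) : set 'M[C]_n :=
  [set rB | density rB /\ forall rB', density rB' -> f rB' <= f rB].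

Definition Phi {nA nB} (H : 'M[C]_(nA * nB)) : set 'M[C]_nB :=
  argmax_density (naive_value H).

Definition Phi_r {nA nB} (Delta : R) (H : 'M[C]_(nA * nB)) : set 'M[C]_nB :=
  argmax_density (robust_value Delta H).
End Defs.

From HB Require Import structures.
From mathcomp Require Import all_boot all_order all_algebra.
From mathcomp Require Import complex mxtens.
From mathcomp Require Import classical_sets reals.
From mathcomp Require Import ring lra.
Set Implicit Arguments.
Unset Strict Implicit.
Unset Printing Implicit Defensive.
Import Order.TTheory GRing.Theory Num.Theory.
Local Open Scope ring_scope.
Local Open Scope complex_scope.

(** For a product state [r = rA *t rB] one has [|r_ij| <= (r_ii + r_jj) / 2], so
    for Hermitian [D] the real part of [\tr (r *m D)] is at most the largest
    column sum of [|D_ij|], i.e. at most the induced 1-norm of [D]; the budget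
    is exhausted by [D = Delta%:M].  Hence the robust value of every strategy
    of B is its naive value minus the constant [Delta], and the two argmax
    sets coincide. *)

Section ComplexEntries.
Variable R : realType.
Local Notation C := R[i].
Local Notation normc := (@Normc.normc R).

Lemma ReD (x y : C) : complex.Re (x + y) = complex.Re x + complex.Re y.
Proof. by case: x; case: y. Qed.

Lemma ReN (x : C) : complex.Re (- x) = - complex.Re x.
Proof. by case: x. Qed.

Lemma Re_sum (I : Type) (r : seq I) (P : pred I) (F : I -> C) :
  complex.Re (\sum_(i <- r | P i) F i) = \sum_(i <- r | P i) complex.Re (F i).
Proof. exact: (big_morph _ ReD). Qed.

Lemma normc_ge0 (z : C) : 0 <= normc z.
Proof. by case: z => a b; exact: sqrtr_ge0. Qed.

Lemma sqr_normc (z : C) : normc z ^+ 2 = complex.Re z ^+ 2 + complex.Im z ^+ 2.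
Proof. by case: z => a b /=; rewrite sqr_sqrtr // addr_ge0 ?sqr_ge0. Qed.

Lemma Re_le_normc (z : C) : complex.Re z <= normc z.
Proof.
have := normc_ge0 z; have := sqr_normc z.
have : 0 <= complex.Im z ^+ 2 by rewrite sqr_ge0.
nra.
Qed.

Lemma normcJ (z : C) : normc (conjc z) = normc z.
Proof. by case: z => a b /=; rewrite sqrrN. Qed.

Lemma normc_sum_le (I : Type) (r : seq I) (P : pred I) (F : I -> C) :
  normc (\sum_(i <- r | P i) F i) <= \sum_(i <- r | P i) normc (F i).
Proof.
elim/big_rec2: _ => [|i y1 y2 _ IH]; first by rewrite Normc.normc0.
exact: le_trans (le_normcD _ _) (lerD _ IH).
Qed.

Lemma Re_mul_ge0 (z w : C) : 0 <= z -> 0 <= w ->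
  complex.Re (z * w) = complex.Re z * complex.Re w.
Proof.
case: z => a b; case: w => c d; rewrite !lecE /= => /andP[/eqP -> _] /andP[/eqP -> _].
by rewrite mulr0 subr0.
Qed.

End ComplexEntries.

Lemma le_mul_of_form_ge0 (R : realFieldType) (a d m : R) : 0 <= a -> 0 <= d ->
  (forall s t, 0 <= s ^+ 2 * a + t ^+ 2 * m * d - 2 * s * t * m) -> m <= a * d.
Proof.
move=> a_ge0 d_ge0 form_ge0.
have [d0|d_neq0] := eqVneq d 0.
  (* at [s = m, t = a + 1] the form is [- m^2 (a + 2)] *)
  have := form_ge0 m (a + 1); rewrite d0; nra.
have d_gt0 : 0 < d by rewrite lt_def d_neq0.
have := form_ge0 d 1; nra.
Qed.

Section DensityEntries.
Variable R : realType.
Local Notation C := R[i].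
Local Notation normc := (@Normc.normc R).

Lemma adjmx_delta n (i : 'I_n) : adjmx (delta_mx i 0 : 'cV[C]_n) = delta_mx 0 i.
Proof. by apply/matrixP => k l; rewrite !mxE conjc_nat andbC. Qed.

Lemma delta_form n (A : 'M[C]_n) i j :
  ((delta_mx 0 i : 'rV_n) *m A *m (delta_mx j 0 : 'cV_n)) 0 0 = A i j.
Proof. by rewrite -rowE -colE !mxE. Qed.

Lemma adjmx_formE n (A : 'M[C]_n) (x : 'cV[C]_n) :
  (adjmx x *m A *m x) 0 0 = \sum_l \sum_k conjc (x l 0) * A l k * x k 0.
Proof.
rewrite mxE exchange_big /=; apply: eq_bigr => k _; rewrite mxE mulr_suml.
by apply: eq_bigr => l _; rewrite !mxE.
Qed.

Lemma sum_supp2 (V : nmodType) n (i j : 'I_n) (f : 'I_n -> V) : i != j ->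
  (forall k, k != i -> k != j -> f k = 0) -> \sum_k f k = f i + f j.
Proof.
move=> i_neq_j f_out; rewrite (bigD1 i) //= (bigD1 j) 1?eq_sym //= big1 ?addr0 //.
by move=> k /andP[k_neq_i k_neq_j]; apply: f_out.
Qed.

Lemma adjmx_form2 n (A : 'M[C]_n) i j (a b : C) : i != j ->
  let x : 'cV_n := a *: delta_mx i 0 + b *: delta_mx j 0 in
  (adjmx x *m A *m x) 0 0 =
    conjc a * A i i * a + conjc a * A i j * b + conjc b * A j i * a + conjc b * A j j * b.
Proof.
move=> i_neq_j x.
have x_out k : k != i -> k != j -> x k 0 = 0.
  by move=> /negPf k_neq_i /negPf k_neq_j; rewrite !mxE k_neq_i k_neq_j /=; ring.
have x_i : x i 0 = a by rewrite !mxE !eqxx (negPf i_neq_j) /=; ring.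
have x_j : x j 0 = b by rewrite !mxE !eqxx eq_sym (negPf i_neq_j) /=; ring.
rewrite adjmx_formE (sum_supp2 i_neq_j) => [|l l_neq_i l_neq_j]; last first.
  by apply: big1 => k _; rewrite x_out // conjc0 !mul0r.
rewrite x_i x_j !(sum_supp2 i_neq_j) ?x_i ?x_j; first ring.
all: by move=> k k_neq_i k_neq_j; rewrite x_out ?mulr0.
Qed.

Lemma herm_entry n (A : 'M[C]_n) i j : herm_mx A -> A j i = conjc (A i j).
Proof. by move=> hA; rewrite -{1}hA mxE. Qed.

Lemma psd_diag_ge0 n (A : 'M[C]_n) i : psd A -> 0 <= A i i.
Proof.
by case=> _ /(_ (delta_mx i 0)); rewrite adjmx_delta delta_form.
Qed.

Lemma psd_normc_sqr_le n (A : 'M[C]_n) i j : psd A ->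
  normc (A i j) ^+ 2 <= complex.Re (A i i) * complex.Re (A j j).
Proof.
move=> psdA; have [hermA form_ge0] := psdA.
have real_diag k : A k k = (complex.Re (A k k))%:C.
  by have := psd_diag_ge0 k psdA; rewrite lecE; case: (A k k) => a b /= /andP[/eqP -> _].
have [<-|i_neq_j] := eqVneq i j; first by rewrite sqr_normc (real_diag i) /=; nra.
apply: le_mul_of_form_ge0 => [||s t]; [by rewrite -lecR -real_diag psd_diag_ge0..|].
have := form_ge0 (s%:C *: delta_mx i 0 + (- t%:C * conjc (A i j)) *: delta_mx j 0).
rewrite (adjmx_form2 _ _ _ i_neq_j) (herm_entry i j hermA) (real_diag i) (real_diag j) lecE => /andP[_].
rewrite sqr_normc; case: (A i j) => p q /=; lra.
Qed.

(* Unlike positive semidefiniteness, these consequences of [density] are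
   visibly stable under Kronecker products. *)
Definition entrywise_density n (r : 'M[C]_n) : Prop :=
  [/\ forall i, 0 <= r i i, \tr r = 1
    & forall i j, normc (r i j) ^+ 2 <= complex.Re (r i i) * complex.Re (r j j)].

Lemma density_entrywise n (r : 'M[C]_n) : density r -> entrywise_density r.
Proof.
by case=> psd_r tr_r; split=> // [i|i j]; [apply: psd_diag_ge0 | apply: psd_normc_sqr_le].
Qed.

Lemma mxtrace_tens m n (A : 'M[C]_m) (B : 'M[C]_n) : \tr (A *t B) = \tr A * \tr B.
Proof. by rewrite /mxtrace mulr_sum; apply: eq_bigr => k _; rewrite mxE. Qed.

Lemma entrywise_density_tens m n (A : 'M[C]_m) (B : 'M[C]_n) :
  entrywise_density A -> entrywise_density B -> entrywise_density (A *t B).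
Proof.
move=> [A_ge0 trA csA] [B_ge0 trB csB].
split=> [k||k l]; rewrite ?mxtrace_tens ?trA ?trB ?mulr1 // !mxE.
  exact: mulr_ge0.
rewrite !Re_mul_ge0 ?A_ge0 ?B_ge0 // Normc.normcM exprMn [X in _ <= X]mulrACA.
exact: ler_pM (sqr_ge0 _) (sqr_ge0 _) (csA _ _) (csB _ _).
Qed.
End DensityEntries.

Lemma ler_sum_term (R : numDomainType) n (F : 'I_n -> R) k :
  (forall i, 0 <= F i) -> F k <= \sum_i F i.
Proof. by move=> F_ge0; rewrite (bigD1 k) //= lerDl sumr_ge0. Qed.

Section TraceBound.
Variable R : realType.
Local Notation C := R[i].
Local Notation normc := (@Normc.normc R).

Lemma normc_le_mean_diag n (r : 'M[C]_n) i j : entrywise_density r ->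
  normc (r i j) <= (complex.Re (r i i) + complex.Re (r j j)) / 2.
Proof.
case=> r_ge0 _ /(_ i j) cs; have := normc_ge0 (r i j).
have := r_ge0 i; have := r_ge0 j; rewrite !lecE => /andP[_ dj] /andP[_ di].
have : 0 <= (complex.Re (r i i) - complex.Re (r j j)) ^+ 2 by rewrite sqr_ge0.
rewrite /= in di dj; nra.
Qed.

Lemma Re_trace_mul_le n (r D : 'M[C]_n) (M : R) : entrywise_density r ->
  (forall j, \sum_i normc (D i j) <= M) -> (forall i, \sum_j normc (D i j) <= M) ->
  complex.Re (\tr (r *m D)) <= M.
Proof.
move=> r_dens col_le row_le; have [r_ge0 tr_r _] := r_dens.
pose d i := complex.Re (r i i).
have d_ge0 i : 0 <= d i by have := r_ge0 i; rewrite lecE => /andP[].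
have sum_d : \sum_i d i = 1 by rewrite -Re_sum -[\sum_i _]/(\tr r) tr_r.
have half_le (s : 'I_n -> R) : (forall i, s i <= M) -> \sum_i d i / 2 * s i <= M / 2.
  move=> s_le; apply: (@le_trans _ _ (\sum_i d i / 2 * M)).
    by apply: ler_sum => i _; apply: ler_wpM2l (s_le i); rewrite divr_ge0.
  by rewrite -!mulr_suml sum_d mul1r mulrC.
apply: (@le_trans _ _ (\sum_i \sum_j (d i + d j) / 2 * normc (D j i))).
  rewrite /mxtrace Re_sum; apply: ler_sum => i _; rewrite mxE Re_sum.
  apply: ler_sum => j _; apply: le_trans (Re_le_normc _) _.
  by rewrite Normc.normcM ler_wpM2r ?normc_ge0 ?normc_le_mean_diag.
under eq_bigr do under eq_bigr do rewrite 2!mulrDl.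
under eq_bigr do rewrite big_split -mulr_sumr.
rewrite big_split /= exchange_big /=; under [X in _ + X]eq_bigr do rewrite -mulr_sumr.
rewrite [M]splitr; exact: lerD (half_le _ col_le) (half_le _ row_le).
Qed.
End TraceBound.

Local Open Scope classical_set_scope.

Section OperatorNorm.
Variable R : realType.
Local Notation C := R[i].
Local Notation normc := (@Normc.normc R).

Lemma vnorm1_delta n (j : 'I_n) : vnorm1 (delta_mx j 0 : 'cV[C]_n) = 1.
Proof.
rewrite /vnorm1 (bigD1 j) //= mxE !eqxx Normc.normc1 big1 ?addr0 // => k /negPf k_neq_j.
by rewrite mxE k_neq_j Normc.normc0.
Qed.

Lemma opnorm1_ubound n (D : 'M[C]_n) :
  has_ubound [set vnorm1 (D *m x) | x in [set x : 'cV[C]_n | vnorm1 x = 1]].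
Proof.
exists (\sum_i \sum_k normc (D i k)) => _ [x x_unit <-].
apply: ler_sum => i _; rewrite mxE; apply: le_trans (normc_sum_le _ _ _) _.
apply: ler_sum => k _; rewrite Normc.normcM ler_piMr ?normc_ge0 // -x_unit.
by rewrite /vnorm1; apply: ler_sum_term => l; apply: normc_ge0.
Qed.

Lemma col_sum_le_opnorm1 n (D : 'M[C]_n) j : \sum_i normc (D i j) <= opnorm1 D.
Proof.
apply: (ub_le_sup (opnorm1_ubound D)); exists (delta_mx j 0); first exact: vnorm1_delta.
by rewrite -colE; apply: eq_bigr => i _; rewrite mxE.
Qed.

Lemma opnorm1_scalar_le n (c : R) : (0 < n)%N -> 0 <= c ->
  opnorm1 (c%:C%:M : 'M[C]_n) <= c.
Proof.
move=> n_gt0 c_ge0; apply: ge_sup.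
  exists (vnorm1 (c%:C%:M *m delta_mx (Ordinal n_gt0) 0)).
  by exists (delta_mx (Ordinal n_gt0) 0) => //; apply: vnorm1_delta.
move=> _ [x x_unit <-]; rewrite mul_scalar_mx /vnorm1.
under eq_bigr do rewrite mxE Normc.normcM.
by rewrite -mulr_sumr -/(vnorm1 x) x_unit mulr1 /= expr0n addr0 sqrtr_sqr ger0_norm.
Qed.

Lemma Re_trace_mul_le_opnorm1 n (r D : 'M[C]_n) : entrywise_density r -> herm_mx D ->
  complex.Re (\tr (r *m D)) <= opnorm1 D.
Proof.
move=> r_dens hermD; apply: Re_trace_mul_le => // [j|i]; first exact: col_sum_le_opnorm1.
under eq_bigr do rewrite (herm_entry _ _ hermD) normcJ.
exact: col_sum_le_opnorm1.
Qed.

Lemma deception_scalar nA nB (Delta : R) : (0 < nA * nB)%N -> 0 <= Delta ->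
  @deception R nA nB Delta (Delta%:C%:M).
Proof.
move=> n_gt0 Delta_ge0; split; last exact: opnorm1_scalar_le.
by apply/matrixP => i j; rewrite !mxE eq_sym rmorphMn; congr (_ *+ _); exact: conjc_real.
Qed.
End OperatorNorm.

Lemma inf_sub_attained (R : realType) (T U : Type) (A : set T) (B : set U)
    (f : T -> R) (g : T -> U -> R) (c : R) (b0 : U) :
  A !=set0 -> has_lbound (f @` A) -> B b0 -> (forall a, A a -> g a b0 = c) ->
  (forall a b, A a -> B b -> g a b <= c) ->
  inf [set f p.1 - g p.1 p.2 | p in [set p | A p.1 /\ B p.2]] = inf (f @` A) - c.
Proof.
move=> [a0 A_a0] [lb lbP] B_b0 g_b0 g_le; set S := [set _ | _ in _].
have S_fc a : A a -> S (f a - c) by exists (a, b0) => //=; rewrite g_b0.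
have lbS : has_lbound S.
  exists (lb - c) => _ [[a b] [/= A_a B_b] <-].
  by have := lbP (f a) (ex_intro2 _ _ a A_a erefl); have := g_le a b A_a B_b; lra.
apply: le_anti; rewrite lerBrDr; apply/andP; split.
  apply: lb_le_inf; first by exists (f a0), a0.
  by move=> _ [a A_a <-]; have := ge_inf lbS (S_fc a A_a); lra.
apply: lb_le_inf; first by exists (f a0 - c); apply: S_fc.
move=> _ [[a b] [/= A_a B_b] <-].
have := ge_inf (ex_intro _ lb lbP) (ex_intro2 _ _ a A_a erefl).
by have := g_le a b A_a B_b; lra.
Qed.

Section Payoff.
Variable R : realType.
Local Notation C := R[i].
Local Notation normc := (@Normc.normc R).

Lemma Re_trace_mul_ge n (r D : 'M[C]_n) : entrywise_density r ->
  - (\sum_i \sum_j normc (D i j)) <= complex.Re (\tr (r *m D)).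
Proof.
move=> r_dens; rewrite lerNl -ReN -raddfN /= -mulmxN.
have row_ge0 i : 0 <= \sum_j normc (D i j) by apply: sumr_ge0 => j _; apply: normc_ge0.
have entryN i j : normc ((- D) i j) = normc (D i j) by rewrite mxE normcN.
apply: Re_trace_mul_le => // [j|i].
  apply: ler_sum => i _; rewrite entryN.
  by apply: ler_sum_term => k; apply: normc_ge0.
by rewrite (eq_bigr _ (fun j _ => entryN i j)) ler_sum_term.
Qed.

Lemma density_delta n (i : 'I_n) : density (delta_mx i i : 'M[C]_n).
Proof.
split; last first.
  rewrite /mxtrace (bigD1 i) //= mxE !eqxx big1 ?addr0 // => k /negPf k_neq_i.
  by rewrite mxE k_neq_i.
split=> [|x]; first by apply/matrixP => k l; rewrite !mxE conjc_nat andbC.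
rewrite -(mul_delta_mx (0 : 'I_1)) mulmxA -colE -mulmxA -rowE mxE big_ord1 !mxE.
by rewrite mulrC mulcJ_ge0.
Qed.

Lemma payoffB nA nB (rA : 'M[C]_nA) (rB : 'M[C]_nB) (H D : 'M[C]_(nA * nB)) :
  payoff rA rB (H - D) = payoff rA rB H - complex.Re (\tr ((rA *t rB) *m D)).
Proof. by rewrite /payoff mulmxBr raddfB /= ReD ReN. Qed.

Lemma robust_value_eq nA nB (Delta : R) (H : 'M[C]_(nA * nB)) (rB : 'M[C]_nB) :
  (0 < nA)%N -> (0 < nB)%N -> 0 <= Delta -> density rB ->
  robust_value Delta H rB = naive_value H rB - Delta.
Proof.
move=> nA_gt0 nB_gt0 Delta_ge0 rB_dens.
have tens_dens rA : density rA -> entrywise_density (rA *t rB).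
  by move=> rA_dens; apply: entrywise_density_tens; apply: density_entrywise.
rewrite /robust_value /naive_value (eq_imagel (fun p _ => payoffB p.1 rB H p.2)).
apply: (inf_sub_attained (A := @density R nA) (B := @deception R nA nB Delta)
  (f := fun rA => payoff rA rB H) (g := fun rA D => complex.Re (\tr ((rA *t rB) *m D)))
  (b0 := Delta%:C%:M)).
- by exists (delta_mx (Ordinal nA_gt0) (Ordinal nA_gt0)); apply: density_delta.
- exists (- \sum_i \sum_j normc (H i j)) => _ [rA rA_dens <-].
  exact/Re_trace_mul_ge/tens_dens.
- by apply: deception_scalar; rewrite ?muln_gt0 ?nA_gt0.
- move=> rA [_ trA]; have [_ trB] := rB_dens.
  by rewrite mul_mx_scalar mxtraceZ mxtrace_tens trA trB !mulr1.
- move=> rA D rA_dens [hermD normD].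
  exact/(le_trans _ normD)/Re_trace_mul_le_opnorm1/hermD/tens_dens.
Qed.
End Payoff.

Lemma argmax_density_shift (R : realType) n (f g : 'M[R[i]]_n -> R) (c : R) :
  (forall r, density r -> g r = f r - c) -> argmax_density g = argmax_density f.
Proof.
move=> gE; apply/seteqP; split=> r [r_dens r_max]; split=> // r' r'_dens;
  by have := r_max r' r'_dens; rewrite !gE // lerD2r.
Qed.

Theorem theorem1 (R : realType) (nA nB : nat) (Delta : R)
  (H : 'M[R[i]]_(nA * nB)) :
  (0 < nA)%N -> (0 < nB)%N -> 0 <= Delta -> herm_mx H ->
  Phi H = Phi_r Delta H.
Proof.
(* the identity [robust_value = naive_value - Delta] holds for any [H] *)
move=> nA_gt0 nB_gt0 Delta_ge0 _; apply/esym/argmax_density_shift => rB.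
exact: robust_value_eq.
Qed.
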